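(* Let $f:\{0,1\}^n\to\{-1,1\}$ and put $\eta=\mathbb E_{x,y}\sum_{\alpha,\beta}\hat{f_x}^2(\alpha)\hat{f_y}^2(\beta)\widehat{f_{x+y}}^2(\alpha+\beta)$ and $\delta=\eta/6$. Let $\phi:\{0,1\}^n\to\{0,1\}^n$ be a random map whose values $\phi(x)$, $x\in\{0,1\}^n$, are independent with $\Pr(\phi(x)=\alpha)=\hat{f_x}^2(\alpha)$. Define $$L(\phi)=\Pr_{x,y}\Big(\phi(x)+\phi(y)=\phi(x+y),\ \hat{f_x}^2(\phi(x))\ge\delta,\ \hat{f_y}^2(\phi(y))\ge\delta,\ \widehat{f_{x+y}}^2(\phi(x+y))\ge\delta\Big),$$ with $x,y$ independent uniform. Then $\mathbb E_\phi L(\phi)\ge\eta/2$.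
   Context: $\{0,1\}^n$ is identified with $\mathbb F_2^n$. $\hat h(\alpha)=\mathbb E_z h(z)(-1)^{\langle\alpha,z\rangle}$; $f_y(x)=f(x)f(x+y)$. (By Parseval, $\sum_\alpha\hat{f_x}^2(\alpha)=1$, so the distribution of $\phi(x)$ is well defined.) *)

From mathcomp Require Import all_boot all_order all_algebra.
Set Implicit Arguments. Unset Strict Implicit. Unset Printing Implicit Defensive.
Import Order.TTheory GRing.Theory Num.Theory.
Local Open Scope ring_scope.

Definition cube (n : nat) := {ffun 'I_n -> bool}.

Definition addc n (x y : cube n) : cube n := [ffun i => x i (+) y i].

Definition dotc n (a z : cube n) : bool := \big[addb/false]_(i < n) (a i && z i).

Definition fhat (R : numFieldType) n (h : cube n -> R) (a : cube n) : R :=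
  (#|{: cube n}|%:R)^-1 * \sum_(z : cube n) h z * (-1) ^+ dotc a z.

Definition fder (R : numFieldType) n (f : cube n -> R) (y : cube n) : cube n -> R :=
  fun x => f x * f (addc x y).

Definition w2 (R : numFieldType) n (f : cube n -> R) (x a : cube n) : R :=
  (fhat (fder f x) a) ^+ 2.

Definition eta (R : numFieldType) n (f : cube n -> R) : R :=
  (#|{: cube n}|%:R ^+ 2)^-1 *
  \sum_(x : cube n) \sum_(y : cube n) \sum_(a : cube n) \sum_(b : cube n)
    w2 f x a * w2 f y b * w2 f (addc x y) (addc a b).

Definition Lphi (R : numFieldType) n (f : cube n -> R) (delta : R)
  (phi : {ffun cube n -> cube n}) : R :=
  (#|{: cube n}|%:R ^+ 2)^-1 *
  \sum_(x : cube n) \sum_(y : cube n)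
    ((addc (phi x) (phi y) == phi (addc x y))
     && (delta <= w2 f x (phi x))
     && (delta <= w2 f y (phi y))
     && (delta <= w2 f (addc x y) (phi (addc x y))))%:R.

(* E_phi L(phi), where the phi(x) are independent with
   Pr(phi(x) = a) = fx^2(a): the law of phi is the product measure. *)
Definition ELphi (R : numFieldType) n (f : cube n -> R) (delta : R) : R :=
  \sum_(phi : {ffun cube n -> cube n})
     (\prod_(x : cube n) w2 f x (phi x)) * Lphi f delta phi.

From mathcomp Require Import all_boot all_order all_algebra.
From mathcomp Require Import ring lra.
Import Order.TTheory GRing.Theory Num.Theory.
Set Implicit Arguments. Unset Strict Implicit. Unset Printing Implicit Defensive.
Local Open Scope ring_scope.

(* For fixed x and y, the event of L(phi) contains each event
   phi(x) = a, phi(y) = b, phi(x+y) = a+b with all three weights >= delta.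
   Since the values of phi are independent, such an event has probability at
   least p_x(a) p_y(b) p_{x+y}(a+b): when x, y, x+y are not distinct, one of
   them is 0, and p_0 is the point mass at 0.  Dropping the triples with a
   weight p, q or r below delta loses at most delta (qr + pr + pq), and these
   products sum to 3 over (a, b); hence E L >= eta - 3 delta = eta/2. *)

Lemma sumr_mul_eq (R : pzSemiRingType) (I : finType) (i : I) (F : I -> R) :
  \sum_j F j * (j == i)%:R = F i.
Proof.
by rewrite (big_only1 i) ?eqxx ?mulr1 // => j /negbTE ->; rewrite mulr0.
Qed.

Section ProductMeasure.

Variables (R : realFieldType) (T J : finType) (p : T -> J -> R).
Hypotheses (p_ge0 : forall u j, 0 <= p u j) (p_sum1 : forall u, \sum_j p u j = 1).

Definition prob (E : pred {ffun T -> J}) : R :=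
  \sum_(phi : {ffun T -> J}) (\prod_u p u (phi u)) * (E phi)%:R.

Lemma eq_prob (E E' : pred {ffun T -> J}) : E =1 E' -> prob E = prob E'.
Proof. by move=> eqE; apply: eq_bigr => phi _; rewrite eqE. Qed.

Lemma p_le1 u j : p u j <= 1.
Proof. by rewrite -(p_sum1 u) (bigD1 j) //= lerDl sumr_ge0. Qed.

Lemma natr_forall (B : pred T) : ([forall u, B u]%:R : R) = \prod_u (B u)%:R.
Proof.
case: (boolP [forall u, B u]) => [/forallP allB | /forallPn[u Bu]].
  by rewrite big1 // => u _; rewrite allB.
by rewrite (bigD1 u) //= (negbTE Bu) mul0r.
Qed.

Lemma prob_all_eq (s : seq T) (v : T -> J) :
  prob (fun phi => all (fun u => phi u == v u) s) = \prod_(u in s) p u (v u).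
Proof.
transitivity (\prod_u \sum_j p u j * ((u \in s) ==> (j == v u))%:R).
  rewrite bigA_distr_bigA; apply: eq_bigr => phi _.
  rewrite big_split /= -natr_forall; congr (_ * _%:R).
  by congr (nat_of_bool _); apply/allP/forall_inP.
rewrite [RHS]big_mkcond; apply: eq_bigr => u _; case: (u \in s) => /=.
  exact: sumr_mul_eq.
by under eq_bigr do rewrite mulr1; apply: p_sum1.
Qed.

Lemma prodr_seq_le_mem (F : T -> R) (s : seq T) :
  (forall u, 0 <= F u <= 1) -> \prod_(u <- s) F u <= \prod_(u in s) F u.
Proof.
move=> F01; have F0 u : 0 <= F u by case/andP: (F01 u).
elim: s => [|u s IHs]; first by rewrite big_nil big_pred0.
rewrite big_cons; have [us | us] := boolP (u \in s).
  rewrite [X in _ <= X](eq_bigl (mem s)) => [|w]; last first.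
    by rewrite inE; case: eqVneq => // ->.
  by apply: le_trans IHs; rewrite ler_piMl ?prodr_ge0 //; case/andP: (F01 u).
rewrite (bigD1 u) ?mem_head //= ler_wpM2l //.
rewrite [X in _ <= X](eq_bigl (mem s)) // => w; rewrite !inE.
by case: eqVneq => [->|]; rewrite ?(negbTE us) ?andbT.
Qed.

End ProductMeasure.

Section Cube.

Variable n : nat.
Implicit Types x y z a b : cube n.

Definition cube0 : cube n := [ffun=> false].

Lemma addcC x y : addc x y = addc y x.
Proof. by apply/ffunP=> i; rewrite !ffunE addbC. Qed.

Lemma addcK x y : addc (addc x y) y = x.
Proof. by apply/ffunP=> i; rewrite !ffunE addbK. Qed.

Lemma addc_inj b : injective (fun x => addc x b).
Proof. by move=> x y /(congr1 (fun z => addc z b)); rewrite !addcK. Qed.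

Lemma addcc x : addc x x = cube0.
Proof. by apply/ffunP=> i; rewrite !ffunE addbb. Qed.

Lemma addc0 x : addc x cube0 = x.
Proof. by apply/ffunP=> i; rewrite !ffunE addbF. Qed.

Lemma addc_eq0 x y : (addc x y == cube0) = (x == y).
Proof.
apply/eqP/eqP => [xy0 | ->]; last exact: addcc.
by rewrite -(addcK x y) xy0 addcC addc0.
Qed.

Lemma addc_eql x y : (addc x y == x) = (y == cube0).
Proof.
apply/eqP/eqP => [xy_x | ->]; last exact: addc0.
by rewrite -(addcK y x) (addcC y x) xy_x addcc.
Qed.

Lemma addc_eqr x y : (addc x y == y) = (x == cube0).
Proof. by rewrite addcC addc_eql. Qed.

Lemma dotcC a z : dotc a z = dotc z a.
Proof. by apply: eq_bigr => i _; rewrite andbC. Qed.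

Lemma dotcDr a z w : dotc a (addc z w) = dotc a z (+) dotc a w.
Proof.
rewrite /dotc -big_split /=; apply: eq_bigr => i _; rewrite ffunE.
by case: (a i).
Qed.

Lemma sumr_cube_const (V : nmodType) (c : V) : \sum_(x : cube n) c = c *+ #|{: cube n}|.
Proof. by rewrite sumr_const; congr (_ *+ _); apply: eq_card. Qed.

Lemma card_cube_gt0 : (0 < #|{: cube n}|)%N.
Proof. by apply/card_gt0P; exists cube0. Qed.

End Cube.

Arguments cube0 {n}.

Section Fourier.

Variables (R : numFieldType) (n : nat).
Implicit Types (g : cube n -> R) (v z a : cube n).

Local Notation N := (#|{: cube n}|%:R : R).

Lemma card_cube_neq0 : N != 0.
Proof. by rewrite pnatr_eq0 -lt0n card_cube_gt0. Qed.

Lemma sum_sign_dotc v :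
  \sum_z (-1) ^+ dotc v z = if v == cube0 then N else 0 :> R.
Proof.
have [-> | v_neq0] := eqVneq v cube0.
  rewrite (eq_bigr (fun _ => 1)) ?sumr_const // => z _.
  by rewrite /dotc big1 // => i _; rewrite ffunE.
have [i vi] : exists i, v i.
  apply/existsP; apply: contraR v_neq0 => /existsPn v0.
  by apply/eqP/ffunP => i; rewrite ffunE; apply/negbTE/v0.
pose e : cube n := [ffun k => k == i].
have dotc_e : dotc v e.
  rewrite /dotc (bigD1 i) //= ffunE eqxx vi big1 // => k /negbTE ki.
  by rewrite ffunE ki andbF.
(* translating by e flips every sign, so the sum equals its opposite *)
set S := \sum_z _; have S_opp : S = - S.
  rewrite {1}/S (reindex_inj (@addc_inj n e)) /= -sumrN.
  by apply: eq_bigr => z _; rewrite dotcDr dotc_e signr_addb expr1 mulrN1.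
by apply/eqP; rewrite -[S == 0]orFb -(mulrn_eq0 S 2) mulr2n {2}S_opp subrr.
Qed.

Lemma sum_sign_dotc_mul z z' :
  \sum_a (-1) ^+ dotc a z * (-1) ^+ dotc a z' = N * (z' == z)%:R :> R.
Proof.
under eq_bigr do rewrite -signr_addb -dotcDr dotcC.
by rewrite sum_sign_dotc addc_eq0 eq_sym; case: (z' == z); rewrite ?mulr1 ?mulr0.
Qed.

Lemma parseval g : \sum_a fhat g a ^+ 2 = N^-1 * \sum_z g z ^+ 2.
Proof.
rewrite /fhat; under eq_bigr do rewrite expr2 mulrACA big_distrlr /=.
rewrite -mulr_sumr exchange_big /=.
under eq_bigr => z _ do rewrite exchange_big /=.
have factor z z' : \sum_a g z * (-1) ^+ dotc a z * (g z' * (-1) ^+ dotc a z')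
    = g z * g z' * N * (z' == z)%:R.
  rewrite -mulrA -sum_sign_dotc_mul mulr_sumr.
  by apply: eq_bigr => a _; rewrite mulrACA.
under eq_bigr => z _ do under eq_bigr => z' _ do rewrite factor.
under eq_bigr => z _ do rewrite sumr_mul_eq -expr2.
by rewrite -mulr_suml [_ * N]mulrC mulrA divfK ?card_cube_neq0.
Qed.

End Fourier.

Section SquaredFourierWeights.

Variables (R : numFieldType) (n : nat) (f : cube n -> R).
Hypothesis f_sq : forall x, f x ^+ 2 = 1.

Lemma w2_sum1 x : \sum_a w2 f x a = 1.
Proof.
rewrite parseval; under eq_bigr do rewrite /fder exprMn !f_sq mulr1.
by rewrite sumr_const mulVf ?card_cube_neq0.
Qed.

Lemma w2_cube0 a : a != cube0 -> w2 f cube0 a = 0.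
Proof.
move=> a_neq0; rewrite /w2 /fhat.
under eq_bigr do rewrite /fder addc0 -expr2 f_sq mul1r.
by rewrite sum_sign_dotc (negbTE a_neq0) mulr0 expr0n.
Qed.

End SquaredFourierWeights.

Lemma mul3_threshold_ge (R : realDomainType) (d p q r : R) :
  0 <= d -> 0 <= p -> 0 <= q -> 0 <= r ->
  p * q * r - d * (q * r + p * r + p * q)
    <= [&& d <= p, d <= q & d <= r]%:R * (p * q * r).
Proof.
move=> d0 p0 q0 r0.
have pq0 := mulr_ge0 p0 q0; have qr0 := mulr_ge0 q0 r0; have pr0 := mulr_ge0 p0 r0.
by case: (leP d p); case: (leP d q); case: (leP d r) => /=; rewrite ?mul1r ?mul0r; nra.
Qed.

Section ThresholdedTriples.

Variables (R : realFieldType) (n : nat) (p : cube n -> cube n -> R).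
Hypotheses (p_ge0 : forall u a, 0 <= p u a) (p_sum1 : forall u, \sum_a p u a = 1).
Hypothesis p_cube0 : forall a, a != cube0 -> p cube0 a = 0.
Implicit Types (x y a b : cube n) (d : R) (phi : {ffun cube n -> cube n}).

Local Notation N2 := (#|{: cube n}|%:R ^+ 2 : R).

(* For p := w2 f, eta_of and EL_of unfold to eta f and ELphi f. *)
Definition eta_of : R :=
  N2^-1 * \sum_x \sum_y \sum_a \sum_b p x a * p y b * p (addc x y) (addc a b).

Definition L_event d x y phi : bool :=
  (addc (phi x) (phi y) == phi (addc x y)) && (d <= p x (phi x))
  && (d <= p y (phi y)) && (d <= p (addc x y) (phi (addc x y))).

Definition EL_of d : R :=
  \sum_(phi : {ffun cube n -> cube n})
    (\prod_x p x (phi x)) * (N2^-1 * \sum_x \sum_y (L_event d x y phi)%:R).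

Definition above_threshold d x y a b : bool :=
  [&& d <= p x a, d <= p y b & d <= p (addc x y) (addc a b)].

Lemma EL_ofE d : EL_of d = N2^-1 * \sum_x \sum_y prob p (L_event d x y).
Proof.
rewrite /EL_of /prob; under eq_bigr do rewrite mulrCA.
rewrite -mulr_sumr; congr (_ * _).
under eq_bigr do rewrite mulr_sumr; rewrite exchange_big; apply: eq_bigr => x _.
by under eq_bigr do rewrite mulr_sumr; rewrite exchange_big.
Qed.

Lemma L_event_split d x y phi :
  (L_event d x y phi)%:R = \sum_a \sum_b (above_threshold d x y a b)%:R *
     [&& phi x == a, phi y == b & phi (addc x y) == addc a b]%:R :> R.
Proof.
rewrite (big_only1 (phi x)) // => [|a ax _]; last first.
  by rewrite big1 // => b _; rewrite (eq_sym (phi x)) (negbTE ax) mulr0.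
rewrite (big_only1 (phi y)) // => [|b yb _]; last first.
  by rewrite (eq_sym (phi y)) (negbTE yb) andbF mulr0.
rewrite !eqxx /L_event /above_threshold eq_sym.
by case: eqP => [<- | _]; rewrite /= ?andbA ?mulr1 ?mulr0 ?andbF.
Qed.

Lemma triple_prob_ge x y a b :
  p x a * p y b * p (addc x y) (addc a b)
  <= prob p (fun phi => [&& phi x == a, phi y == b & phi (addc x y) == addc a b]).
Proof.
have [-> | ] := eqVneq (p x a * p y b * p (addc x y) (addc a b)) 0.
  by apply: sumr_ge0 => phi _; rewrite mulr_ge0 ?prodr_ge0.
rewrite !mulf_eq0 !negb_or => /andP[/andP[pxa pyb] pxyab].
(* p cube0 is the point mass at cube0, so the labels are consistent *)
have label0 u c : u = cube0 -> p u c != 0 -> c = cube0.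
  by move=> -> puc; apply/eqP; apply: contraNT puc => /p_cube0 ->.
pose v u := if u == x then a else if u == y then b else addc a b.
have vx : v x = a by rewrite /v eqxx.
have vy : v y = b.
  rewrite /v eqxx; case: eqVneq => [yx | //].
  have /eqP : addc a b = cube0 by apply: label0 pxyab; rewrite yx addcc.
  by rewrite addc_eq0 => /eqP.
have vxy : v (addc x y) = addc a b.
  rewrite /v addc_eql addc_eqr.
  have [/label0 /(_ pyb) -> | _] := eqVneq y cube0; first by rewrite addc0.
  have [/label0 /(_ pxa) -> | //] := eqVneq x cube0.
  by rewrite addcC addc0.
have -> : prob p (fun phi => [&& phi x == a, phi y == b & phi (addc x y) == addc a b])
    = \prod_(u in [:: x; y; addc x y]) p u (v u).
  rewrite -prob_all_eq //; apply: eq_prob => phi /=.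
  by rewrite vx vy vxy andbT.
apply: le_trans (prodr_seq_le_mem _ _) => [|u]; last by rewrite p_ge0 p_le1.
by rewrite !big_cons big_nil mulr1 vx vy vxy mulrA.
Qed.

Lemma L_event_prob_ge d x y :
  \sum_a \sum_b (above_threshold d x y a b)%:R * (p x a * p y b * p (addc x y) (addc a b))
  <= prob p (L_event d x y).
Proof.
rewrite /prob; under [leRHS]eq_bigr do rewrite L_event_split mulr_sumr.
rewrite [leRHS]exchange_big /=; apply: ler_sum => a _.
under [leRHS]eq_bigr do rewrite mulr_sumr.
rewrite [leRHS]exchange_big /=; apply: ler_sum => b _.
under eq_bigr do rewrite mulrCA; rewrite -mulr_sumr.
by rewrite ler_wpM2l ?ler0n ?triple_prob_ge.
Qed.

Lemma sum_shift_sum1 u b : \sum_a p u (addc a b) = 1.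
Proof. by rewrite -(p_sum1 u) [RHS](reindex_inj (@addc_inj n b)). Qed.

Lemma sum_pair_weights x y :
  \sum_a \sum_b (p y b * p (addc x y) (addc a b) + p x a * p (addc x y) (addc a b)
                 + p x a * p y b) = 3.
Proof.
have sum_yz : \sum_a \sum_b p y b * p (addc x y) (addc a b) = 1.
  rewrite exchange_big /= -(p_sum1 y); apply: eq_bigr => b _.
  by rewrite -mulr_sumr sum_shift_sum1 mulr1.
have sum_xz : \sum_a \sum_b p x a * p (addc x y) (addc a b) = 1.
  rewrite -(p_sum1 x); apply: eq_bigr => a _.
  by under eq_bigr do rewrite (addcC a); rewrite -mulr_sumr sum_shift_sum1 mulr1.
have sum_xy : \sum_a \sum_b p x a * p y b = 1 by rewrite -big_distrlr /= !p_sum1 mulr1.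
transitivity (1 + 1 + 1 : R); last lra.
rewrite -{1}sum_yz -{1}sum_xz -sum_xy -!big_split /=.
by apply: eq_bigr => a _; rewrite -!big_split.
Qed.

Lemma EL_of_ge d : 0 <= d -> eta_of - 3 * d <= EL_of d.
Proof.
move=> d0; rewrite EL_ofE.
have N2_gt0 : 0 < N2 by rewrite exprn_gt0 // ltr0n card_cube_gt0.
have -> : eta_of - 3 * d = N2^-1 * \sum_x \sum_y
    (\sum_a \sum_b p x a * p y b * p (addc x y) (addc a b) - 3 * d).
  rewrite /eta_of; symmetry; under eq_bigr do rewrite sumrB.
  rewrite sumrB mulrBr !sumr_cube_const -mulrnA -[_ *+ (_ * _)%N]mulr_natr natrM -expr2.
  by rewrite mulrCA mulVf ?mulr1 ?gt_eqF.
apply: ler_wpM2l; first by rewrite invr_ge0 ltW.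
apply: ler_sum => x _; apply: ler_sum => y _.
apply: le_trans (L_event_prob_ge d x y).
rewrite -(sum_pair_weights x y) mulrC mulr_sumr -sumrB.
apply: ler_sum => a _; rewrite mulr_sumr -sumrB; apply: ler_sum => b _.
by rewrite mul3_threshold_ge ?mulr_ge0.
Qed.

Lemma eta_of_ge0 : 0 <= eta_of.
Proof.
rewrite mulr_ge0 ?invr_ge0 ?exprn_ge0 ?ler0n //.
by do 4!(apply: sumr_ge0 => ? _); rewrite !mulr_ge0.
Qed.

Lemma EL_of_half : eta_of / 2 <= EL_of (eta_of / 6).
Proof.
have -> : eta_of / 2 = eta_of - 3 * (eta_of / 6) by field.
by apply: EL_of_ge; rewrite divr_ge0 ?eta_of_ge0.
Qed.

End ThresholdedTriples.

Unset Implicit Arguments.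

Theorem lemma6p7 (R : realFieldType) (n : nat) (f : cube n -> R)
  (hf : forall x, f x = 1 \/ f x = -1) :
  ELphi f (eta f / 6) >= eta f / 2.
Proof.
have f_sq x : f x ^+ 2 = 1 by case: (hf x) => ->; rewrite ?sqrrN expr1n.
exact: (EL_of_half (fun x a => sqr_ge0 _) (w2_sum1 f_sq) (w2_cube0 f_sq)).
Qed.
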